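(* Let $\mathbb{F}$, $\mathfrak g$, $\mathcal C$, $\mathcal C^{du}$, $M$, $Lie(\cdot)$ be as in the context. Let $h\in\mathfrak g$ be such that for every object $V$ of $\mathcal C$: (1) $h_V$ is diagonalizable with integer eigenvalues, and (2) $s^{h_V}\in End_{V^{du}}(V)$ for every $s\in\mathbb F^\times$. Then $h$ is an integrable locally finite element of $\mathfrak g$. Furthermore: (a) for every $s\in\mathbb F^\times$ there is an element $s^h\in M$ acting on each object $V$ by $s^{h_V}$; (b) the set $EV$ of all eigenvalues of $h_V$, $V$ ranging over objects of $\mathcal C$, is a submonoid of $\mathbb Z$, and, equipping $\mathbb F^\times$ with the Laurent polynomial functions $\mathbb F[s,s^{-1}]$, the map $t_h:(\mathbb F^\times,\cdot)\to M$, $s\mapsto s^h$, is a morphism of monoids and a morphism of sets with coordinate rings whose comorphism has image $t_h^*(\mathbb F[M])=\bigoplus_{b\in EV}\mathbb F s^b$; denote its image $T_h$; (c) $Lie(T_h)=\mathbb Fh$.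
   Context: Let $\mathbb F$ be a field of characteristic $0$, $\mathfrak g$ a Lie algebra over $\mathbb F$. $\mathcal C$: full subcategory of $\mathfrak g$-modules closed under isomorphism and submodules, containing a direct sum and tensor product of any two objects and a one-dimensional trivial module, with only $0\in\mathfrak g$ acting trivially on all objects. $x_V$ = action. Category of duals: point-separating $V^{du}\subseteq V^*$ with $\phi\circ x_V\in V^{du}$ ($x\in\mathfrak g$), $\psi\circ\alpha\in V^{du}$ for morphisms $\alpha:V\to W$, $\psi\in W^{du}$, $(V\oplus W)^{du}=V^{du}\oplus W^{du}$, $V^{du}\otimes W^{du}\subseteq(V\otimes W)^{du}$. $End_{V^{du}}(V)=\{\varphi:\phi\circ\varphi\in V^{du}\ \forall\phi\}$. $Nat$: families $(m_V)_V$, $m_V\in End_{V^{du}}(V)$, commuting with all morphisms. $M=\{m\in Nat:m_{V\otimes W}=m_V\otimes m_W,\ m_{V_0}=id$ for trivial one-dimensional $V_0\}$; $\mathbb F[M]=\{f_{\phi v}\}$, $f_{\phi v}(m)=\phi(m_Vv)$; Zariski topology via common zero sets. $Lie(M)=\{y\in Nat:y_{V\otimes W}=y_V\otimes id+id\otimes y_W,\ y_{V_0}=0,\ \exists\,\delta_y:\mathbb F[M]\to\mathbb F$ with $\delta_y(f_{\phi v})=\phi(y_Vv)\}$; for a submonoid $N$ with vanishing ideal $I(N)$, $Lie(N)=\{y\in Lie(M):\delta_y(I(N))=0\}$; $\mathfrak g$ identified with $\{(y_V)_V\}\subseteq Nat$. If $\alpha\in End(W)$ is diagonalizable with integer eigenvalues,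 i.e. $\alpha w_j=z_jw_j$ for a basis $(w_j)$ with $z_j\in\mathbb Z$, then $s^\alpha w_j:=s^{z_j}w_j$ for $s\in\mathbb F^\times$. For a subalgebra $\mathfrak s$ acting locally finitely, $\mathcal C(\mathfrak s)$ is the category of $\mathfrak s$-modules isomorphic to finite-dimensional $\mathfrak s$-submodules of objects of $\mathcal C$ (all $\mathfrak s$-maps as morphisms), $M(\mathfrak s)$ the monoid obtained from it by the same construction with full duals $U^{du}=U^*$, with its coordinate ring and Zariski topology; it acts on objects $V$ of $\mathcal C$ via finite-dimensional $\mathfrak s$-submodules. An element $e\in\mathfrak g$ is integrable locally finite if it acts locally finitely on all objects and there is a Zariski dense submonoid $D\subseteq M(\mathbb Fe)$ with $d_V\in End_{V^{du}}(V)$ for all $d\in D$ and objects $V$. A morphism of sets with coordinate rings $\varphi:X\to Y$ is a map with $f\circ\varphi\in\mathbb F[X]$ for all $f\in\mathbb F[Y]$; its comorphism is $\varphi^*(f)=f\circ\varphi$. *)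

From HB Require Import structures.
From mathcomp Require Import all_boot all_order all_algebra.
Set Implicit Arguments. Unset Strict Implicit. Unset Printing Implicit Defensive.
Import Order.TTheory GRing.Theory Num.Theory.
Local Open Scope ring_scope.

Definition lin (F : fieldType) (U W : lmodType F) (f : U -> W) :=
  forall (a : F) (u v : U), f (a *: u + v) = a *: f u + f v.
Definition linfun (F : fieldType) (U : lmodType F) (f : U -> F) :=
  forall (a : F) (u v : U), f (a *: u + v) = a * f u + f v.
Definition bilin (F : fieldType) (U W T : lmodType F) (b : U -> W -> T) :=
  (forall w, lin (fun u => b u w)) /\ (forall u, lin (b u)).
Definition is_tensor (F : fieldType) (U W T : lmodType F) (b : U -> W -> T) :=
  bilin b /\ forall (X : lmodType F) (f : U -> W -> X), bilin f ->
    exists g : T -> X, [/\ lin g, (forall u w, g (b u w) = f u w) &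
      forall g' : T -> X, lin g' -> (forall u w, g' (b u w) = f u w) ->
        forall t, g' t = g t].
Definition is_dsum (F : fieldType) (U W D : lmodType F)
  (i1 : U -> D) (i2 : W -> D) (p1 : D -> U) (p2 : D -> W) :=
  [/\ lin i1, lin i2, lin p1, lin p2 &
   [/\ forall u, p1 (i1 u) = u, forall w, p2 (i2 w) = w,
       forall w, p1 (i2 w) = 0, forall u, p2 (i1 u) = 0
     & forall d, i1 (p1 d) + i2 (p2 d) = d]].
Definition inspan (F : fieldType) (U : lmodType F) (s : seq U) (v : U) :=
  exists c : 'I_(size s) -> F, v = \sum_(i < size s) c i *: s`_i.
Definition findim (F : fieldType) (U : lmodType F) :=
  exists s : seq U, forall v, inspan s v.
Definition onedim (F : fieldType) (U : lmodType F) :=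
  exists u0 : U, u0 != 0 /\ forall v, exists c : F, v = c *: u0.
(* a is diagonalizable with integer eigenvalues: V is spanned by eigenvectors
   of a with integer eigenvalues (equivalently, V has a basis of such). *)
Definition intdiag (F : fieldType) (V : lmodType F) (a : V -> V) :=
  forall v, exists s : seq (int * V),
    (forall p, p \in s -> a p.2 = p.1%:~R *: p.2) /\ v = \sum_(p <- s) p.2.
Definition is_spow (F : fieldType) (V : lmodType F) (a : V -> V) (s : F) (f : V -> V) :=
  lin f /\ forall (z : int) (w : V), a w = z%:~R *: w -> f w = s ^ z *: w.
Definition laurent (F : fieldType) (q : F -> F) :=
  exists l : seq (F * int), forall x, x != 0 -> q x = \sum_(p <- l) p.1 * x ^ p.2.

Record lieAlgebra (F : fieldType) := LieAlgebra {
  lie_sort :> lmodType F;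
  lie_br : lie_sort -> lie_sort -> lie_sort;
  _ : forall a x y z, lie_br (a *: x + y) z = a *: lie_br x z + lie_br y z;
  _ : forall a x y z, lie_br z (a *: x + y) = a *: lie_br z x + lie_br z y;
  _ : forall x, lie_br x x = 0;
  _ : forall x y z, lie_br x (lie_br y z) + lie_br y (lie_br z x) + lie_br z (lie_br x y) = 0 }.

Record gmod (F : fieldType) (g : lieAlgebra F) := GMod {
  gm_sort :> lmodType F;
  gm_act : g -> gm_sort -> gm_sort;
  _ : forall x a u v, gm_act x (a *: u + v) = a *: gm_act x u + gm_act x v;
  _ : forall a x y v, gm_act (a *: x + y) v = a *: gm_act x v + gm_act y v;
  _ : forall x y v, gm_act (lie_br x y) v = gm_act x (gm_act y v) - gm_act y (gm_act x v) }.

Section GMods.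
Variables (F : fieldType) (g : lieAlgebra F).
Local Notation gm := (gmod g).

Definition ghom (V W : gm) (f : V -> W) :=
  lin f /\ forall x v, f (gm_act x v) = gm_act x (f v).
Definition giso (V W : gm) (f : V -> W) := ghom f /\ bijective f.
Definition gtrivial1 (V : gm) := onedim V /\ forall x (v : V), gm_act x v = 0.
Definition gdsum (V W D : gm) (i1 : V -> D) (i2 : W -> D) (p1 : D -> V) (p2 : D -> W) :=
  [/\ is_dsum i1 i2 p1 p2, ghom i1, ghom i2, ghom p1 & ghom p2].
Definition gtensor (V W T : gm) (b : V -> W -> T) :=
  is_tensor b /\ forall x v w, gm_act x (b v w) = b (gm_act x v) w + b v (gm_act x w).

(* the category C (full subcategory, given by its class of objects) *)
Definition is_category (C : gm -> Prop) :=
  [/\ (forall (V W : gm) (f : V -> W), C V -> giso f -> C W),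
      (forall (V W : gm) (f : W -> V), C V -> ghom f -> injective f -> C W),
      (forall V W, C V -> C W -> exists (D : gm) i1 i2 p1 p2, C D /\ @gdsum V W D i1 i2 p1 p2),
      (forall V W, C V -> C W -> exists (T : gm) b, C T /\ @gtensor V W T b) &
      (exists V0, C V0 /\ gtrivial1 V0) /\
      (forall x : g, (forall V, C V -> forall v : V, gm_act x v = 0) -> x = 0)].

(* a category of duals V^du (subspaces of the algebraic dual of V) *)
Definition is_duals (C : gm -> Prop) (du : forall V : gm, (V -> F) -> Prop) :=
  [/\ (forall V, C V -> forall phi, du V phi -> linfun phi),
      (forall V, C V -> du V (fun _ => 0) /\
         forall a phi psi, du V phi -> du V psi -> du V (fun v => a * phi v + psi v)),
      (forall V, C V -> forall v : V, (forall phi, du V phi -> phi v = 0) -> v = 0),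
      (forall V, C V -> forall x phi, du V phi -> du V (fun v => phi (gm_act x v))) &
   [/\ (forall (V W : gm) (al : V -> W), C V -> C W -> ghom al ->
          forall psi, du W psi -> du V (psi \o al)),
       (forall V W D i1 i2 p1 p2, C V -> C W -> C D -> @gdsum V W D i1 i2 p1 p2 ->
          forall chi, du D chi <-> exists phi psi,
            [/\ du V phi, du W psi & forall d, chi d = phi (p1 d) + psi (p2 d)]) &
       (forall V W T b, C V -> C W -> C T -> @gtensor V W T b ->
          forall phi psi chi, du V phi -> du W psi -> linfun chi ->
            (forall v w, chi (b v w) = phi v * psi w) -> du T chi)]].

Definition EndDu (du : forall V : gm, (V -> F) -> Prop) (V : gm) (f : V -> V) :=
  lin f /\ forall psi, du V psi -> du V (psi \o f).

(* families indexed by objects; only their values on objects of C matter *)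
Definition natT := forall V : gm, V -> V.
Definition natEq (C : gm -> Prop) (m m' : natT) :=
  forall V, C V -> forall v : V, m V v = m' V v.

Unset Implicit Arguments.
Variables (C : gm -> Prop) (du : forall V : gm, (V -> F) -> Prop).
Set Implicit Arguments.

Definition isNat (m : natT) :=
  (forall V, C V -> EndDu du (m V)) /\
  forall (V W : gm) (al : V -> W), C V -> C W -> ghom al ->
    forall v, al (m V v) = m W (al v).
Definition inM (m : natT) :=
  [/\ isNat m,
      (forall V W T b, C V -> C W -> C T -> @gtensor V W T b ->
         forall v w, m T (b v w) = b (m V v) (m W w)) &
      (forall V0, C V0 -> gtrivial1 V0 -> forall v, m V0 v = v)].
(* F[M] = { f_{phi v} }, functions on M *)
Definition coordM (f : natT -> F) :=
  exists (V : gm) (phi : V -> F) (v : V),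
    [/\ C V, du V phi & forall m, inM m -> f m = phi (m V v)].
Definition vanishI (N : natT -> Prop) (f : natT -> F) :=
  coordM f /\ forall m, N m -> f m = 0.
Definition isDelta (y : natT) (delta : (natT -> F) -> F) :=
  forall (V : gm) (phi : V -> F) (v : V) (f : natT -> F), C V -> du V phi ->
    (forall m, inM m -> f m = phi (m V v)) -> delta f = phi (y V v).
Definition inLieM (y : natT) :=
  [/\ isNat y,
      (forall V W T b, C V -> C W -> C T -> @gtensor V W T b ->
         forall v w, y T (b v w) = b (y V v) w + b v (y W w)),
      (forall V0, C V0 -> gtrivial1 V0 -> forall v, y V0 v = 0) &
      exists delta, isDelta y delta].
Definition inLie (N : natT -> Prop) (y : natT) :=
  inLieM y /\ forall delta, isDelta y delta -> forall f, vanishI N f -> delta f = 0.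

(* An Fe-module is a space U with the linear endomorphism a by which e acts. *)
Definition CFe (e : g) (U : lmodType F) (a : U -> U) :=
  [/\ lin a, findim U &
      exists (V : gm) (j : U -> V),
        [/\ C V, lin j, injective j & forall u, j (a u) = gm_act e (j u)]].
Definition natT' := forall U : lmodType F, (U -> U) -> U -> U.
Definition fetensor (U W T : lmodType F) (a : U -> U) (a' : W -> W) (c : T -> T)
  (b : U -> W -> T) := is_tensor b /\ forall u w, c (b u w) = b (a u) w + b u (a' w).
Definition inMFe (e : g) (m : natT') :=
  [/\ (forall (U : lmodType F) (a : U -> U), CFe e a -> lin (m U a)),
      (forall (U : lmodType F) (a : U -> U) (W : lmodType F) (a' : W -> W) (f : U -> W), CFe e a -> CFe e a' -> lin f ->
         (forall u, f (a u) = a' (f u)) -> forall u, f (m U a u) = m W a' (f u)),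
      (forall (U : lmodType F) (a : U -> U) (W : lmodType F) (a' : W -> W) (T : lmodType F) (c : T -> T) b,
         CFe e a -> CFe e a' -> CFe e c -> fetensor a a' c b ->
         forall u w, m T c (b u w) = b (m U a u) (m W a' w)) &
      (forall (U : lmodType F) (a : U -> U), CFe e a -> onedim U -> (forall u, a u = 0) ->
         forall u, m U a u = u)].
(* F[M(Fe)], with full duals *)
Definition coordMFe (e : g) (f : natT' -> F) :=
  exists (U : lmodType F) (a : U -> U) (phi : U -> F) (u : U),
    [/\ CFe e a, linfun phi & forall m, inMFe e m -> f m = phi (m U a u)].
(* gV is the action of d on V, computed on finite-dimensional Fe-submodules *)
Definition actsOn (e : g) (d : natT') (V : gm) (gV : V -> V) :=
  forall (U : lmodType F) (a : U -> U) (j : U -> V), CFe e a -> lin j -> injective j ->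
    (forall u, j (a u) = gm_act e (j u)) -> forall u, gV (j u) = j (d U a u).
Definition locfin (e : g) :=
  forall V : gm, C V -> forall v : V, exists s : seq V,
    inspan s v /\ forall w, inspan s w -> inspan s (gm_act e w).
Definition int_locfin (e : g) :=
  locfin e /\ exists D : natT' -> Prop,
    [/\ (forall d, D d -> inMFe e d),
        D (fun U a u => u),
        (forall d d', D d -> D d' -> D (fun U a u => d U a (d' U a u))),
        (* Zariski density of D in M(Fe) *)
        (forall f, coordMFe e f -> (forall d, D d -> f d = 0) ->
           forall m, inMFe e m -> f m = 0) &
        (forall d, D d -> forall V, C V -> exists gV : V -> V, actsOn e d gV /\ EndDu du gV)].

Definition EV (h : g) (z : int) :=
  exists V : gm, C V /\ exists w : V, w != 0 /\ gm_act h w = z%:~R *: w.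

End GMods.

(* Since h acts diagonalizably with integer eigenvalues, s^h acts on an h-eigenvector
   of eigenvalue z by s^z, so every coordinate function of M, restricted to {s^h}, is a
   Laurent polynomial in s whose exponents are eigenvalues of h. In characteristic 0 a
   Laurent polynomial vanishing on F^x has zero coefficients. This gives the density of
   {s^h} in M(Fh) (an element of M(Fh) acts on the z-eigenvectors by scalars chi z), the
   description of t_h^*(F[M]), and the well-definedness of the derivation c h of F[M]
   (h acts on coordinate functions as s d/ds at s = 1). Conversely an element y of
   Lie(T_h) kills every functional vanishing on an eigenvector v, so y v = la(z) v;
   direct sums show that la is well defined and tensor products that it is additive on
   the monoid of eigenvalues, hence la(z) = c z. *)

From HB Require Import structures.
From mathcomp Require Import all_boot all_order ssralg ssrnum ssrint poly zify ring.
From Stdlib Require Import Classical ClassicalEpsilon FunctionalExtensionality.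
Set Implicit Arguments. Unset Strict Implicit. Unset Printing Implicit Defensive.
Import Order.TTheory GRing.Theory Num.Theory.
Local Open Scope ring_scope.

Lemma partition_big_undup (T K : eqType) (R : nmodType) (k : T -> K) (l : seq T) (G : T -> R) :
  \sum_(j <- undup (map k l)) \sum_(p <- l | k p == j) G p = \sum_(p <- l) G p.
Proof.
under eq_bigr do rewrite big_mkcond.
rewrite exchange_big /=; apply: eq_big_seq => p pl.
rewrite -big_mkcond -big_filter.
have -> : [seq j <- undup (map k l) | k p == j] = [:: k p].
  rewrite -(filter_pred1_uniq (undup_uniq (map k l))); last by rewrite mem_undup map_f.
  by apply: eq_filter => j /=; rewrite eq_sym.
by rewrite big_seq1.
Qed.

Section LinearMaps.
Variable F : fieldType.

Section Lin.
Variables (U W : lmodType F) (f : U -> W).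
Hypothesis f_lin : lin f.
Let fL : {linear U -> W} := HB.pack f (GRing.isLinear.Build F U W *:%R f f_lin).

Lemma lin0 : f 0 = 0. Proof. exact: linear0 fL. Qed.
Lemma linD u v : f (u + v) = f u + f v. Proof. exact: linearD fL u v. Qed.
Lemma linZ a u : f (a *: u) = a *: f u. Proof. exact: linearZ_LR fL a u. Qed.
Lemma linB u v : f (u - v) = f u - f v. Proof. exact: linearB fL u v. Qed.
Lemma lin_sum (I : Type) (r : seq I) (P : pred I) (G : I -> U) :
  f (\sum_(i <- r | P i) G i) = \sum_(i <- r | P i) f (G i).
Proof. exact (linear_sum fL r P G). Qed.
End Lin.

Section Linfun.
Variables (U : lmodType F) (phi : U -> F).
Hypothesis phi_lin : linfun phi.
Let phiL : {linear U -> F | *%R} := HB.pack phi (GRing.isLinear.Build F U F *%R phi phi_lin).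

Lemma linfun0 : phi 0 = 0. Proof. exact: linear0 phiL. Qed.
Lemma linfunZ a u : phi (a *: u) = a * phi u. Proof. exact: linearZ_LR phiL a u. Qed.
Lemma linfunB u v : phi (u - v) = phi u - phi v. Proof. exact: linearB phiL u v. Qed.
Lemma linfun_sum (I : Type) (r : seq I) (P : pred I) (G : I -> U) :
  phi (\sum_(i <- r | P i) G i) = \sum_(i <- r | P i) phi (G i).
Proof. exact (linear_sum phiL r P G). Qed.
End Linfun.

Lemma lin_comp (U V W : lmodType F) (f : V -> W) (g : U -> V) :
  lin f -> lin g -> lin (fun u => f (g u)).
Proof. by move=> f_lin g_lin a u v; rewrite g_lin f_lin. Qed.

Definition eigen_pairs (U : lmodType F) (a : U -> U) (l : seq (int * U)) :=
  forall p, p \in l -> a p.2 = p.1%:~R *: p.2.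

Section SPow.
Variables (U : lmodType F) (a : U -> U).

Lemma spow_sum s f l : is_spow a s f -> eigen_pairs a l ->
  f (\sum_(p <- l) p.2) = \sum_(p <- l) s ^ p.1 *: p.2.
Proof.
move=> [f_lin f_eig] Hl; rewrite (lin_sum f_lin) big_seq [RHS]big_seq.
by apply: eq_bigr => p pl; rewrite (f_eig p.1) // Hl.
Qed.

Lemma spow_unique s f f' : intdiag a -> is_spow a s f -> is_spow a s f' -> f = f'.
Proof.
move=> a_diag Hf Hf'; apply: functional_extensionality => v.
by have [l [Hl ->]] := a_diag v; rewrite (spow_sum Hf Hl) (spow_sum Hf' Hl).
Qed.

Lemma spow1 : is_spow a 1 (fun u => u).
Proof. by split=> // z w _; rewrite exp1rz scale1r. Qed.

Lemma spowM s t f f' : is_spow a s f -> is_spow a t f' ->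
  is_spow a (s * t) (fun u => f (f' u)).
Proof.
move=> [f_lin f_eig] [f'_lin f'_eig]; split; first exact: lin_comp.
move=> z w Hw; rewrite (f'_eig z w Hw) (linZ f_lin) (f_eig z w Hw).
by rewrite scalerA expfzMl mulrC.
Qed.

Lemma spow_fix s f u : is_spow a s f -> a u = 0 -> f u = u.
Proof. by move=> [_ f_eig] au0; rewrite (f_eig 0) ?expr0z ?scale1r // au0 scale0r. Qed.

Lemma linfun_spow_sum (phi : U -> F) s f l : linfun phi -> is_spow a s f -> eigen_pairs a l ->
  phi (f (\sum_(p <- l) p.2)) = \sum_(p <- l) phi p.2 * s ^ p.1.
Proof.
move=> phi_lin Hf Hl; rewrite (spow_sum Hf Hl) (linfun_sum phi_lin).
by apply: eq_bigr => p _; rewrite (linfunZ phi_lin) mulrC.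
Qed.

Lemma linfun_eigen_sum (phi : U -> F) l : linfun phi -> lin a -> eigen_pairs a l ->
  phi (a (\sum_(p <- l) p.2)) = \sum_(p <- l) phi p.2 * p.1%:~R.
Proof.
move=> phi_lin a_lin Hl; rewrite (lin_sum a_lin) (linfun_sum phi_lin) big_seq [RHS]big_seq.
by apply: eq_bigr => p pl; rewrite Hl // (linfunZ phi_lin) mulrC.
Qed.
End SPow.

Lemma spow_intertwine (U W : lmodType F) (a : U -> U) (a' : W -> W) (j : U -> W) s fU fW :
  lin j -> (forall u, j (a u) = a' (j u)) -> intdiag a -> is_spow a s fU -> is_spow a' s fW ->
  forall u, j (fU u) = fW (j u).
Proof.
move=> j_lin ja a_diag HU [fW_lin fW_eig] u; have [l [Hl ->]] := a_diag u.
rewrite (spow_sum HU Hl) !(lin_sum j_lin) (lin_sum fW_lin) !big_seq.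
by apply: eq_bigr => p pl; rewrite (linZ j_lin) (fW_eig p.1) // -ja Hl // (linZ j_lin).
Qed.

(* Weights add in a tensor product, and s^(z + z') = s^z s^z' as s != 0. *)
Lemma spow_tensor (U W T : lmodType F) (a : U -> U) (a' : W -> W) (c : T -> T)
    (b : U -> W -> T) s fU fW fT :
  s != 0 -> bilin b -> (forall u w, c (b u w) = b (a u) w + b u (a' w)) ->
  intdiag a -> intdiag a' -> is_spow a s fU -> is_spow a' s fW -> is_spow c s fT ->
  forall u w, fT (b u w) = b (fU u) (fW w).
Proof.
move=> s0 [b_lin1 b_lin2] cb a_diag a'_diag HU HW [fT_lin fT_eig] u w.
have [l [Hl ->]] := a_diag u; have [l' [Hl' ->]] := a'_diag w.
rewrite (spow_sum HU Hl) (spow_sum HW Hl') (lin_sum (b_lin1 _)) (lin_sum fT_lin).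
rewrite [RHS](lin_sum (b_lin1 _)) big_seq [RHS]big_seq; apply: eq_bigr => p pl.
rewrite (lin_sum (b_lin2 _)) (lin_sum fT_lin) [RHS](lin_sum (b_lin2 _)).
rewrite big_seq [RHS]big_seq; apply: eq_bigr => q ql.
rewrite (linZ (b_lin1 _)) (linZ (b_lin2 _)) scalerA -expfzDr //.
apply: fT_eig; rewrite cb Hl // Hl' // (linZ (b_lin1 _)) (linZ (b_lin2 _)).
by rewrite intrD scalerDl.
Qed.

Definition spow (U : lmodType F) (a : U -> U) (s : F) : U -> U :=
  epsilon (inhabits (fun u => u)) (is_spow a s).

Lemma spowP (U : lmodType F) (a : U -> U) s : (exists f, is_spow a s f) -> is_spow a s (spow a s).
Proof. exact: epsilon_spec. Qed.

End LinearMaps.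

Section AdditiveRelation.
Variables (R : comNzRingType) (E : int -> R -> Prop).
Hypotheses (E0 : E 0 0)
  (ED : forall z z' la la', E z la -> E z' la' -> E (z + z') (la + la'))
  (E_fun : forall z la la', E z la -> E z la' -> la = la').

Lemma additive_rel_mulrn z la n : E z la -> E (z *+ n) (la *+ n).
Proof. by move=> Ez; elim: n => [|n IH]; rewrite ?mulr0n // !mulrS; apply: ED. Qed.

Lemma additive_rel_eq z z' la la' m n : E z la -> E z' la' ->
  z *+ m = z' *+ n -> la *+ m = la' *+ n.
Proof.
move=> Ez Ez' e; apply: E_fun (additive_rel_mulrn n Ez').
by rewrite -e; apply: additive_rel_mulrn.
Qed.

Lemma additive_rel_opp z z' la la' m n : E z la -> E z' la' ->
  z *+ m + z' *+ n = 0 -> la *+ m + la' *+ n = 0.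
Proof.
move=> Ez Ez' e; apply: E_fun E0; rewrite -e.
by apply: ED; apply: additive_rel_mulrn.
Qed.

(* |z'| z and |z| z' are equal or opposite; compare the matching multiples of la, la'. *)
Lemma additive_rel_cross z z' la la' : E z la -> E z' la' -> la *~ z' = la' *~ z.
Proof.
case: z => a Ez; case: z' => b Ez' /=.
- by apply: additive_rel_eq Ez Ez' _; lia.
- apply/eqP; rewrite eq_sym -addr_eq0; apply/eqP.
  by apply: additive_rel_opp Ez' Ez _; rewrite NegzE; lia.
- apply/eqP; rewrite -addr_eq0; apply/eqP.
  by apply: additive_rel_opp Ez Ez' _; rewrite NegzE; lia.
- by congr (- _); apply: additive_rel_eq Ez Ez' _; rewrite !NegzE; lia.
Qed.
End AdditiveRelation.

Section Char0.
Variables (F : fieldType) (F0 : [pchar F] =i pred0).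

Lemma pchar0_natr_eq0 n : (n%:R == 0 :> F) = (n == 0)%N.
Proof. exact: (pcharf0P F).1 F0 n. Qed.

Lemma pchar0_intr_eq0 (z : int) : (z%:~R == 0 :> F) = (z == 0).
Proof. by case: z => n; rewrite ?NegzE ?mulrNz ?oppr_eq0 pchar0_natr_eq0. Qed.

Lemma pchar0_intr_inj : injective (fun z : int => z%:~R : F).
Proof. by move=> z z' /eqP; rewrite -subr_eq0 -intrB pchar0_intr_eq0 subr_eq0 => /eqP. Qed.

Lemma pchar0_poly_eq0 (p : {poly F}) : (forall x, x != 0 -> p.[x] = 0) -> p = 0.
Proof.
move=> p0; apply/eqP/negPn/negP => p_neq0.
pose xs := [seq (i.+1)%:R : F | i <- iota 0 (size p)].
have xs_roots : all (root p) xs.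
  by apply/allP => _ /mapP [i _ ->]; apply/eqP/p0; rewrite pchar0_natr_eq0.
have xs_uniq : uniq xs.
  rewrite map_inj_uniq ?iota_uniq // => i j /(@pchar0_intr_inj i.+1 j.+1).
  by case.
by have := max_poly_roots p_neq0 xs_roots xs_uniq; rewrite size_map size_iota ltnn.
Qed.

(* Multiplying by s^N for N large turns the Laurent polynomial into a polynomial
   with the same coefficients, which must vanish. *)
Lemma vanishing_laurent_reweight (l : seq (F * int)) :
  (forall s, s != 0 -> \sum_(p <- l) p.1 * s ^ p.2 = 0) ->
  forall chi : int -> F, \sum_(p <- l) p.1 * chi p.2 = 0.
Proof.
move=> l0 chi.
have [N N_ge] : exists N, forall p, p \in l -> (absz p.2 <= N)%N.
  exists (\max_(p <- l) absz p.2) => p pl.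
  exact: (@leq_bigmax_seq _ l (fun _ => true) (fun p : F * int => absz p.2) p pl isT).
pose e (p : F * int) := absz (p.2 + N%:Z).
have eE p : p \in l -> (e p)%:Z = p.2 + N.
  move=> /N_ge pN; rewrite /e abszE ger0_norm // -lerBlDr sub0r.
  by apply: lerNnormlW; rewrite -abszE lez_nat.
pose P : {poly F} := \sum_(p <- l) p.1 *: 'X^(e p).
have P0 : P = 0.
  apply: pchar0_poly_eq0 => x x0; rewrite horner_sum.
  transitivity ((\sum_(p <- l) p.1 * x ^ p.2) * x ^+ N); last by rewrite l0 ?mul0r.
  rewrite mulr_suml big_seq [RHS]big_seq; apply: eq_bigr => p pl.
  rewrite hornerZ hornerXn -mulrA -[x ^+ e p]/(x ^ (e p)%:Z) eE //.
  by rewrite expfzDr.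
have coef0 k : \sum_(p <- l | e p == k) p.1 = 0.
  by have := congr1 (fun q : {poly F} => q`_k) P0; rewrite /= coef_sumMXn coef0.
rewrite -(partition_big_undup e) big1 // => k _.
rewrite big_seq_cond (eq_bigr (fun p => p.1 * chi (k%:Z - N%:Z))).
  by rewrite -mulr_suml -big_seq_cond coef0 mul0r.
by move=> p /andP [pl /eqP <-]; rewrite eE // addrK.
Qed.

Fixpoint prod_shift (U : lmodType F) (a : U -> U) (zs : seq int) (u : U) : U :=
  if zs is z :: zs' then a (prod_shift a zs' u) - z%:~R *: prod_shift a zs' u else u.

Lemma prod_shift_lin (U : lmodType F) (a : U -> U) zs : lin a -> lin (prod_shift a zs).
Proof.
move=> a_lin; elim: zs => [|z zs IH] //= c u v.
rewrite IH a_lin scalerDr scalerBr !scalerA [_ * c]mulrC -scalerA.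
by rewrite opprD addrACA.
Qed.

Lemma prod_shift_intertwine (U V : lmodType F) (a : U -> U) (b : V -> V) (j : U -> V) zs u :
  lin j -> (forall u, j (a u) = b (j u)) -> j (prod_shift a zs u) = prod_shift b zs (j u).
Proof.
move=> j_lin ja; elim: zs => [|z zs IH] //=.
by rewrite (linB j_lin) (linZ j_lin) ja IH.
Qed.

Lemma prod_shift_eigen (U : lmodType F) (a : U -> U) zs (z0 : int) w :
  lin a -> a w = z0%:~R *: w -> prod_shift a zs w = (\prod_(z <- zs) (z0 - z)%:~R) *: w.
Proof.
move=> a_lin aw; elim: zs => [|z zs IH] /=; first by rewrite big_nil scale1r.
by rewrite IH (linZ a_lin) aw big_cons !scalerA -scalerBl intrB mulrBl [_ * _%:~R]mulrC.
Qed.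

(* The z-component of u is recovered by applying prod_(z' != z) (a - z') / (z - z'). *)
Lemma intdiag_restrict (U V : lmodType F) (a : U -> U) (b : V -> V) (j : U -> V) :
  lin b -> lin j -> injective j -> (forall u, j (a u) = b (j u)) ->
  intdiag b -> intdiag a.
Proof.
move=> b_lin j_lin j_inj ja b_diag u; have [l [Hl ju]] := b_diag (j u).
pose Z := undup (map fst l); pose zs z := filter (predC1 z) Z.
pose K z : F := \prod_(z' <- zs z) (z - z')%:~R.
pose x z := (K z)^-1 *: prod_shift a (zs z) u.
have jx z : j (x z) = \sum_(p <- l | p.1 == z) p.2.
  rewrite /x (linZ j_lin) (prod_shift_intertwine _ _ j_lin ja) ju.
  rewrite (lin_sum (prod_shift_lin _ b_lin)) [RHS]big_mkcond scaler_sumr !big_seq.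
  apply: eq_bigr => p pl; rewrite (prod_shift_eigen _ b_lin (Hl p pl)) /=.
  case: eqP => [->|ne].
    rewrite scalerA mulVf ?scale1r // prodf_seq_neq0; apply/allP => z' /=.
    by rewrite mem_filter /= pchar0_intr_eq0 subr_eq0 eq_sym => /andP [].
  have pz : p.1 \in zs z by rewrite mem_filter /= mem_undup map_f ?andbT //; apply/eqP.
  by rewrite (big_rem _ pz) /= subrr mul0r scale0r scaler0.
exists [seq (z, x z) | z <- Z]; split.
  move=> _ /mapP [z _ ->] /=; apply: j_inj.
  rewrite ja jx (lin_sum b_lin) (linZ j_lin) jx scaler_sumr big_seq_cond [RHS]big_seq_cond.
  by apply: eq_bigr => p /andP [pl /eqP <-]; exact: Hl.
by apply: j_inj; rewrite big_map (lin_sum j_lin) (eq_bigr _ (fun z _ => jx z)) partition_big_undup.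
Qed.

Lemma additive_rel_linear (E : int -> F -> Prop) : E 0 0 ->
  (forall z z' la la', E z la -> E z' la' -> E (z + z') (la + la')) ->
  (forall z la la', E z la -> E z la' -> la = la') ->
  exists c, forall z la, E z la -> la = c * z%:~R.
Proof.
move=> E0 ED E_fun.
have [[z0 [la0 [Ez0 z0_neq0]]] | all0] := classic (exists z la, E z la /\ z != 0).
  have z0F : z0%:~R != 0 :> F by rewrite pchar0_intr_eq0.
  exists (la0 / z0%:~R) => z la Ez; apply: (mulIf z0F).
  by rewrite mulrAC divfK // !mulrzr; apply: (additive_rel_cross E0 ED E_fun Ez Ez0).
exists 0 => z la Ez; rewrite mul0r.
have [z0|z_neq0] := eqVneq z 0; last by case: all0; exists z, la.
by move: Ez; rewrite z0 => /E_fun; apply.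
Qed.
End Char0.

Lemma scale_vec_inj (F : fieldType) (U : lmodType F) (u : U) :
  u != 0 -> injective (fun a : F => a *: u).
Proof.
move=> u_neq0 a b /eqP; rewrite -subr_eq0 -scalerBl scaler_eq0 (negbTE u_neq0) orbF.
by rewrite subr_eq0 => /eqP.
Qed.

Lemma gm_act_lin (F : fieldType) (g : lieAlgebra F) (V : gmod g) (x : g) :
  lin (@gm_act _ _ V x).
Proof. by case: V => ? ? act_lin ? ?; exact: act_lin. Qed.

Section IntegrableH.
Variables (F : fieldType) (g : lieAlgebra F).
Unset Implicit Arguments.
Variables (C : gmod g -> Prop) (du : forall V : gmod g, (V -> F) -> Prop) (h : g).
Set Implicit Arguments.
Hypotheses (F0 : [pchar F] =i pred0) (HC : is_category C) (Hdu : is_duals C du)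
  (h_diag : forall V, C V -> intdiag (@gm_act _ _ V h))
  (h_spow : forall V, C V -> forall s : F, s != 0 ->
     exists f, is_spow (@gm_act _ _ V h) s f /\ EndDu du f).

Local Notation hV V := (@gm_act _ _ V h).

Lemma du_linfun (V : gmod g) phi : C V -> du V phi -> linfun phi.
Proof. by move=> CV du_phi; case: Hdu => du_lin _ _ _ _; exact: du_lin CV _ du_phi. Qed.

Lemma du0 (V : gmod g) : C V -> du V (fun _ => 0).
Proof. by move=> CV; case: Hdu => _ du_sub _ _ _; exact: (du_sub V CV).1. Qed.

Lemma du_comb (V : gmod g) phi psi a : C V -> du V phi -> du V psi ->
  du V (fun v => a * phi v + psi v).
Proof. by move=> CV; case: Hdu => _ du_sub _ _ _; exact: (du_sub V CV).2. Qed.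

Lemma du_scale (V : gmod g) phi a : C V -> du V phi -> du V (fun v => a * phi v).
Proof.
move=> CV du_phi; have := du_comb a CV du_phi (du0 CV).
by have -> : (fun v => a * phi v + 0) = (fun v => a * phi v)
  by apply: functional_extensionality => v; rewrite addr0.
Qed.

Lemma du_act (V : gmod g) phi : C V -> du V phi -> du V (fun v => phi (hV V v)).
Proof. by move=> CV; case: Hdu => _ _ _ du_act _; exact: du_act V CV h phi. Qed.

Lemma du_separates (V : gmod g) (v : V) : C V -> v != 0 -> exists2 phi, du V phi & phi v != 0.
Proof.
move=> CV /eqP v_neq0; apply: NNPP => no_phi; apply: v_neq0.
case: Hdu => _ _ du_sep _ _; apply: du_sep => // phi du_phi.
by apply/eqP/negPn/negP => phi_v; apply: no_phi; exists phi.
Qed.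

Lemma tensor_neq0 (V W T : gmod g) (b : V -> W -> T) (v : V) (w : W) :
  C V -> C W -> gtensor b -> v != 0 -> w != 0 -> b v w != 0.
Proof.
move=> CV CW [[_ b_univ] _] v_neq0 w_neq0.
have [phi du_phi phi_v] := du_separates CV v_neq0.
have [psi du_psi psi_w] := du_separates CW w_neq0.
have phi_lin := du_linfun CV du_phi; have psi_lin := du_linfun CW du_psi.
have phipsi_bilin : bilin (fun (u : V) (w' : W) => phi u * psi w' : F^o).
  split=> [w'|u] c x x' /=; first by rewrite phi_lin mulrDl -mulrA.
  by rewrite psi_lin mulrDr mulrCA.
have [k [k_lin k_b _]] := b_univ _ _ phipsi_bilin.
apply/eqP => bvw0; have := k_b v w; rewrite bvw0 (lin0 k_lin) => /esym/eqP.
by rewrite mulf_eq0 (negbTE phi_v) (negbTE psi_w).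
Qed.

Lemma tensor_eigen (V W T : gmod g) (b : V -> W -> T) v w (z z' : int) :
  gtensor b -> hV V v = z%:~R *: v -> hV W w = z'%:~R *: w ->
  hV T (b v w) = (z + z')%:~R *: b v w.
Proof.
move=> [[[b_lin1 b_lin2] _] b_act] hv hw.
by rewrite b_act hv hw (linZ (b_lin1 _)) (linZ (b_lin2 _)) intrD scalerDl.
Qed.

Lemma EV0 : EV C h 0.
Proof.
case: HC => _ _ _ _ [[V0 [CV0 [[u0 [u0_neq0 _]] V0_triv]]] _].
by exists V0; split=> //; exists u0; rewrite V0_triv scale0r.
Qed.

Lemma EV_add z z' : EV C h z -> EV C h z' -> EV C h (z + z').
Proof.
move=> [V [CV [v [v_neq0 hv]]]] [W [CW [w [w_neq0 hw]]]].
case: HC => _ _ _ tensor _; have [T [b [CT b_tensor]]] := tensor V W CV CW.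
exists T; split=> //; exists (b v w); split; first exact: tensor_neq0.
exact: tensor_eigen.
Qed.

Lemma hpow_spec (V : gmod g) s : C V -> s != 0 ->
  is_spow (hV V) s (spow (hV V) s) /\ EndDu du (spow (hV V) s).
Proof.
move=> CV s0; have [f [f_spow f_end]] := h_spow CV s0.
by rewrite (spow_unique (h_diag CV) (spowP (ex_intro _ f f_spow)) f_spow).
Qed.

Lemma hpow_inM s : s != 0 -> inM C du (fun V => spow (hV V) s).
Proof.
move=> s0; have spec (V : gmod g) (CV : C V) := (hpow_spec CV s0).1.
split.
- split=> [V CV | V W al CV CW [al_lin al_act] v]; first exact: (hpow_spec CV s0).2.
  exact: (spow_intertwine al_lin (al_act h) (h_diag CV) (spec V CV) (spec W CW)).
- move=> V W T b CV CW CT [[b_bilin _] b_act] v w.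
  exact: (spow_tensor s0 b_bilin (b_act h) (h_diag CV) (h_diag CW)
            (spec V CV) (spec W CW) (spec T CT)).
- by move=> V0 CV0 [_ V0_triv] v; apply: (spow_fix (spec V0 CV0)).
Qed.

Lemma h_locfin : locfin C h.
Proof.
move=> V CV v; have [l [Hl ->]] := h_diag CV v.
exists (map snd l); split.
  exists (fun _ => 1); rewrite -(big_map snd predT id) (big_nth 0) big_mkord.
  by apply: eq_bigr => i _; rewrite scale1r.
move=> _ [c ->]; exists (fun i => c i * (nth (0, 0) l i).1%:~R).
rewrite (lin_sum (gm_act_lin h)); apply: eq_bigr => i _.
have il : (i < size l)%N by rewrite -(size_map snd l).
by rewrite (linZ (gm_act_lin h)) (nth_map (0, 0)) // Hl ?mem_nth // scalerA.
Qed.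

Lemma CFe_intdiag (U : lmodType F) (a : U -> U) : CFe C h a -> intdiag a.
Proof.
case=> _ _ [V [j [CV j_lin j_inj ja]]].
by apply: (intdiag_restrict F0 (gm_act_lin h) j_lin j_inj ja (h_diag CV)).
Qed.

Lemma CFe_spow (U : lmodType F) (a : U -> U) s :
  CFe C h a -> s != 0 -> is_spow a s (spow a s).
Proof.
move=> Ha s0; apply: spowP; have a_diag := CFe_intdiag Ha.
case: Ha => [a_lin _ [V [j [CV j_lin j_inj ja]]]].
have [fV [[fV_lin fV_eig] _]] := h_spow CV s0.
have preim u : exists x, j x = fV (j u).
  have [l [Hl ->]] := a_diag u; exists (\sum_(p <- l) s ^ p.1 *: p.2).
  rewrite !(lin_sum j_lin) (lin_sum fV_lin) !big_seq; apply: eq_bigr => p pl.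
  have hj : hV V (j p.2) = p.1%:~R *: j p.2 by rewrite -ja Hl // (linZ j_lin).
  by rewrite (linZ j_lin) (fV_eig _ _ hj).
pose f u := epsilon (inhabits u) (fun x => j x = fV (j u)).
have jf u : j (f u) = fV (j u) := epsilon_spec (inhabits u) _ (preim u).
exists f; split=> [c u v | z w aw]; apply: j_inj.
  by rewrite j_lin !jf j_lin fV_lin.
have hj : hV V (j w) = z%:~R *: j w by rewrite -ja aw (linZ j_lin).
by rewrite jf (linZ j_lin) (fV_eig _ _ hj).
Qed.

Definition hpowFe (s : F) : natT' F := fun U a => spow a s.

Definition is_hpowFe (d : natT' F) :=
  exists2 s : F, s != 0 &
    forall (U : lmodType F) (a : U -> U), CFe C h a -> is_spow a s (d U a).

Lemma hpowFe_is_hpowFe s : s != 0 -> is_hpowFe (hpowFe s).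
Proof. by move=> s0; exists s => // U a Ha; exact: CFe_spow. Qed.

Lemma is_hpowFe_inMFe d : is_hpowFe d -> inMFe C h d.
Proof.
move=> [s s0 d_s]; split.
- by move=> U a Ha; exact: (d_s U a Ha).1.
- move=> U a W a' j Ha Ha' j_lin ja u.
  exact: (spow_intertwine j_lin ja (CFe_intdiag Ha) (d_s U a Ha) (d_s W a' Ha')).
- move=> U a W a' T c b Ha Ha' Hc [[b_bilin _] b_act] u w.
  exact: (spow_tensor s0 b_bilin b_act (CFe_intdiag Ha) (CFe_intdiag Ha')
            (d_s U a Ha) (d_s W a' Ha') (d_s T c Hc)).
- by move=> U a Ha _ a0 u; exact: (spow_fix (d_s U a Ha)).
Qed.

Lemma CFe_line (U : lmodType F) (a : U -> U) (x : U) (z : int) :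
  CFe C h a -> x != 0 -> a x = z%:~R *: x -> CFe C h (fun c : F^o => z%:~R * c).
Proof.
move=> [a_lin _ [V [j [CV j_lin j_inj ja]]]] x_neq0 ax; split.
- by move=> c u v /=; rewrite mulrDr mulrCA.
- by exists [:: 1 : F^o] => v; exists (fun _ => v); rewrite big_ord1 /= [_ *: _]mulr1.
- exists V, (fun c : F^o => j (c *: x)); split=> //.
  + by move=> c u v /=; rewrite scalerDl -scalerA (linD j_lin) (linZ j_lin).
  + by move=> c c' /j_inj /scale_vec_inj; apply.
  + by move=> c /=; rewrite -ja (linZ a_lin) ax scalerA mulrC.
Qed.

Lemma inMFe_eigen (U : lmodType F) (a : U -> U) m x (z : int) :
  inMFe C h m -> CFe C h a -> a x = z%:~R *: x ->
  m U a x = m F^o (fun c : F^o => z%:~R * c) 1 *: x.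
Proof.
move=> [m_lin m_nat _ _] Ha ax.
have [->|x_neq0] := eqVneq x 0; first by rewrite (lin0 (m_lin U a Ha)) scaler0.
have a_lin : lin a by case: Ha.
have j_lin : lin (fun c : F^o => c *: x) by move=> c u v /=; rewrite scalerDl scalerA.
have ja c : (z%:~R * c) *: x = a (c *: x) by rewrite (linZ a_lin) ax scalerA mulrC.
by have := m_nat _ _ _ _ _ (CFe_line Ha x_neq0 ax) Ha j_lin ja 1; rewrite /= scale1r.
Qed.

(* An element of M(Fh) acts on the z-eigenvectors by a scalar chi z, so a coordinate
   function takes at it the value obtained by substituting chi for s^z. *)
Lemma hpowFe_dense f : coordMFe C h f -> (forall d, is_hpowFe d -> f d = 0) ->
  forall m, inMFe C h m -> f m = 0.
Proof.
move=> [U [a [phi [u [Ha phi_lin f_phi]]]]] f0 m Hm.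
have [m_lin _ _ _] := Hm; have [l [Hl u_l]] := CFe_intdiag Ha u.
have laurent0 s : s != 0 -> \sum_(q <- [seq (phi p.2, p.1) | p <- l]) q.1 * s ^ q.2 = 0.
  move=> s0; have hs := hpowFe_is_hpowFe s0; have := f0 _ hs.
  rewrite f_phi; last exact: is_hpowFe_inMFe hs.
  by rewrite u_l (linfun_spow_sum phi_lin (CFe_spow Ha s0) Hl) big_map.
have := vanishing_laurent_reweight F0 laurent0 (fun z => m F^o (fun c : F^o => z%:~R * c) 1).
rewrite big_map f_phi // u_l (lin_sum (m_lin U a Ha)) (linfun_sum phi_lin) => sum0.
rewrite -[RHS]sum0 !big_seq; apply: eq_bigr => p pl.
by rewrite (inMFe_eigen Hm Ha (Hl p pl)) (linfunZ phi_lin) mulrC.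
Qed.

Lemma h_int_locfin : int_locfin C du h.
Proof.
split; first exact: h_locfin.
exists is_hpowFe; split.
- exact: is_hpowFe_inMFe.
- by exists 1 => [|U a _]; [exact: oner_neq0 | exact: spow1].
- move=> d d' [s s0 d_s] [t t0 d'_t]; exists (s * t) => [|U a Ha]; first exact: mulf_neq0.
  exact: spowM (d_s U a Ha) (d'_t U a Ha).
- exact: hpowFe_dense.
- move=> d [s s0 d_s] V CV; have [fV [fV_spow fV_end]] := h_spow CV s0.
  exists fV; split=> // U a j Ha j_lin j_inj ja u.
  by rewrite (spow_intertwine j_lin ja (CFe_intdiag Ha) (d_s U a Ha) fV_spow).
Qed.

Lemma coordM0 : coordM C du (fun _ => 0).
Proof.
case: HC => _ _ _ _ [[V0 [CV0 _]] _].
by exists V0, (fun _ => 0), 0; split=> //; exact: du0.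
Qed.

Lemma coordM_add f1 f2 :
  coordM C du f1 -> coordM C du f2 -> coordM C du (fun m => f1 m + f2 m).
Proof.
move=> [V1 [phi1 [v1 [CV1 du_phi1 f1_phi]]]] [V2 [phi2 [v2 [CV2 du_phi2 f2_phi]]]].
case: HC => _ _ dsum _ _; have [D [i1 [i2 [p1 [p2 [CD D_dsum]]]]]] := dsum V1 V2 CV1 CV2.
have [[_ _ p1_lin p2_lin [p1i1 p2i2 p1i2 p2i1 _]] i1_hom i2_hom _ _] := D_dsum.
exists D, (fun d => phi1 (p1 d) + phi2 (p2 d)), (i1 v1 + i2 v2); split=> //.
  case: Hdu => _ _ _ _ [_ du_dsum _]; apply/(du_dsum V1 V2 D i1 i2 p1 p2 CV1 CV2 CD D_dsum).
  by exists phi1, phi2.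
move=> m Hm; have [[m_end m_nat] _ _] := Hm.
rewrite /= f1_phi // f2_phi // (linD (m_end D CD).1) -(m_nat _ _ _ CV1 CD i1_hom).
rewrite -(m_nat _ _ _ CV2 CD i2_hom) !(linD p1_lin) !(linD p2_lin).
by rewrite p1i1 p1i2 p2i1 p2i2 addr0 add0r.
Qed.

Section PowerMap.
Unset Implicit Arguments.
Variable th : F -> natT g.
Set Implicit Arguments.
Hypothesis th_hpow : forall s : F, s != 0 -> inM C du (th s) /\
  forall V, C V -> is_spow (hV V) s (th s V).

Let th_inM s : s != 0 -> inM C du (th s) := fun s0 => (th_hpow s0).1.
Let th_spow s (V : gmod g) : s != 0 -> C V -> is_spow (hV V) s (th s V) :=
  fun s0 CV => (th_hpow s0).2 V CV.

Lemma th1 : natEq C (th 1) (fun V v => v).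
Proof.
by move=> V CV v; rewrite (spow_unique (h_diag CV) (th_spow (oner_neq0 F) CV) (spow1 _)).
Qed.

Lemma thM s t : s != 0 -> t != 0 -> natEq C (th (s * t)) (fun V v => th s V (th t V v)).
Proof.
move=> s0 t0 V CV v.
by rewrite (spow_unique (h_diag CV) (th_spow (mulf_neq0 s0 t0) CV)
  (spowM (th_spow s0 CV) (th_spow t0 CV))).
Qed.

Lemma coordM_th_laurent f : coordM C du f -> laurent (fun s => f (th s)).
Proof.
move=> [V [phi [v [CV du_phi f_phi]]]]; have [l [Hl v_l]] := h_diag CV v.
exists [seq (phi p.2, p.1) | p <- l] => s s0; rewrite f_phi; last exact: th_inM.
by rewrite v_l (linfun_spow_sum (du_linfun CV du_phi) (th_spow s0 CV) Hl) big_map.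
Qed.

Lemma coordM_th_monomial c z : EV C h z ->
  exists2 f, coordM C du f & forall s, s != 0 -> f (th s) = c * s ^ z.
Proof.
move=> [V [CV [w [w_neq0 hw]]]]; have [phi du_phi phi_w] := du_separates CV w_neq0.
exists (fun m => c / phi w * phi (m V w)).
  by exists V, (fun x => c / phi w * phi x), w; split=> //; exact: du_scale.
move=> s s0; rewrite ((th_spow s0 CV).2 z w hw) (linfunZ (du_linfun CV du_phi)).
by rewrite mulrCA divfK // mulrC.
Qed.

Lemma coordM_th_image (q : F -> F) :
  (exists f, coordM C du f /\ forall s, s != 0 -> q s = f (th s)) <->
  (exists l : seq (F * int), (forall p, p \in l -> EV C h p.2) /\
     forall s, s != 0 -> q s = \sum_(p <- l) p.1 * s ^ p.2).
Proof.
split=> [[f [[V [phi [v [CV du_phi f_phi]]]] q_f]] | [l [l_EV q_l]]].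
  have [l [Hl v_l]] := h_diag CV v; have phi_lin := du_linfun CV du_phi.
  exists [seq if p.2 == 0 then (0, 0) else (phi p.2, p.1) | p <- l]; split.
    move=> _ /mapP [p pl ->]; case: eqP => [_|/eqP p_neq0]; first exact: EV0.
    by exists V; split=> //; exists p.2; split=> //; exact: Hl.
  move=> s s0; rewrite q_f // f_phi; last exact: th_inM.
  rewrite v_l (linfun_spow_sum phi_lin (th_spow s0 CV) Hl) big_map.
  by apply: eq_bigr => p _; case: eqP => [->|_] //=; rewrite (linfun0 phi_lin) !mul0r.
suff [f [f_coord f_l]] : exists f, coordM C du f /\
    forall s, s != 0 -> f (th s) = \sum_(p <- l) p.1 * s ^ p.2.
  by exists f; split=> // s s0; rewrite q_l // f_l.
elim: l l_EV {q_l} => [|p l IH] l_EV.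
  by exists (fun _ => 0); split=> [|s _]; [exact: coordM0 | rewrite big_nil].
have [f1 f1_coord f1_p] := coordM_th_monomial p.1 (l_EV p (mem_head _ _)).
have [|f2 [f2_coord f2_l]] := IH; first by move=> p' p'l; apply: l_EV; rewrite inE p'l orbT.
exists (fun m => f1 m + f2 m); split; first exact: coordM_add.
by move=> s s0; rewrite big_cons f1_p // f2_l.
Qed.

(* Both sides are Laurent polynomials in s, and h acts as s d/ds at s = 1. *)
Lemma coord_th_eq_act (V V' : gmod g) phi phi' (v : V) (v' : V') :
  C V -> C V' -> du V phi -> du V' phi' ->
  (forall s, s != 0 -> phi (th s V v) = phi' (th s V' v')) -> phi (hV V v) = phi' (hV V' v').
Proof.
move=> CV CV' du_phi du_phi' agree.
have phi_lin := du_linfun CV du_phi; have phi'_lin := du_linfun CV' du_phi'.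
have [l [Hl v_l]] := h_diag CV v; have [l' [Hl' v'_l']] := h_diag CV' v'.
pose L := [seq (phi p.2, p.1) | p <- l] ++ [seq (- phi' p.2, p.1) | p <- l'].
have L0 s : s != 0 -> \sum_(p <- L) p.1 * s ^ p.2 = 0.
  move=> s0; have := agree s s0; rewrite v_l v'_l'.
  rewrite (linfun_spow_sum phi_lin (th_spow s0 CV) Hl).
  rewrite (linfun_spow_sum phi'_lin (th_spow s0 CV') Hl').
  rewrite big_cat !big_map /= => ->.
  by rewrite -big_split big1 // => p _ /=; rewrite mulNr subrr.
have := vanishing_laurent_reweight F0 L0 (fun z => z%:~R).
rewrite big_cat !big_map /= v_l v'_l' (linfun_eigen_sum phi_lin (gm_act_lin h) Hl).
rewrite (linfun_eigen_sum phi'_lin (gm_act_lin h) Hl') => sum0.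
apply/eqP; rewrite -subr_eq0 -sumrN; apply/eqP; rewrite -[RHS]sum0; congr (_ + _).
by apply: eq_bigr => p _; rewrite mulNr.
Qed.

Definition th_image (m : natT g) := exists s : F, s != 0 /\ m = th s.

Section ScaledH.
Unset Implicit Arguments.
Variables (c : F) (y : natT g).
Set Implicit Arguments.
Hypothesis y_ch : natEq C y (fun V v => c *: hV V v).

Lemma scaled_h_isNat : isNat C du y.
Proof.
split=> [V CV | V W al CV CW [al_lin al_act] v]; last first.
  by rewrite y_ch // y_ch // (linZ al_lin) al_act.
split=> [a u v | psi du_psi].
  by rewrite !y_ch // (gm_act_lin h) scalerDr !scalerA mulrC.
have -> : psi \o y V = (fun v => c * psi (hV V v) + 0).
  apply: functional_extensionality => v /=.
  by rewrite y_ch // (linfunZ (du_linfun CV du_psi)) addr0.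
by apply: du_comb => //; [exact: du_act | exact: du0].
Qed.

(* The derivation sends the coordinate function phi(m v) to c phi(h v); this is
   well defined because phi(h v) only depends on the restriction of phi(m v) to T_h. *)
Lemma scaled_h_delta : exists delta, isDelta C du y delta.
Proof.
pose rep f r := forall (V : gmod g) phi (v : V), C V -> du V phi ->
  (forall m, inM C du m -> f m = phi (m V v)) -> r = phi (y V v).
exists (fun f => epsilon (inhabits 0) (rep f)) => V phi v f CV du_phi f_phi.
suff /(epsilon_spec (inhabits 0)) : exists r, rep f r by apply.
exists (phi (y V v)) => V' phi' v' CV' du_phi' f_phi'.
rewrite y_ch // y_ch // (linfunZ (du_linfun CV du_phi)) (linfunZ (du_linfun CV' du_phi')).
congr (_ * _); apply: coord_th_eq_act => // s s0.
by rewrite -(f_phi _ (th_inM s0)) -(f_phi' _ (th_inM s0)).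
Qed.

Lemma scaled_h_inLie : inLie C du th_image y.
Proof.
split; last first.
  move=> delta delta_y f [[V [phi [v [CV du_phi f_phi]]]] f_van].
  rewrite (delta_y V phi v f CV du_phi f_phi) y_ch // (linfunZ (du_linfun CV du_phi)).
  rewrite (coord_th_eq_act (phi' := fun _ => 0) (v' := v) CV CV du_phi (du0 CV)) ?mulr0 //.
  by move=> s s0; rewrite -(f_phi _ (th_inM s0)) f_van //; exists s.
split.
- exact: scaled_h_isNat.
- move=> V W T b CV CW CT [[[b_lin1 b_lin2] _] b_act] v w.
  by rewrite !y_ch // b_act scalerDr (linZ (b_lin1 _)) (linZ (b_lin2 _)).
- by move=> V0 CV0 [_ V0_triv] v; rewrite y_ch // V0_triv scaler0.
- exact: scaled_h_delta.
Qed.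
End ScaledH.

Section LieTh.
Unset Implicit Arguments.
Variable y : natT g.
Set Implicit Arguments.
Hypothesis y_Lie : inLie C du th_image y.

Let y_lin (V : gmod g) : C V -> lin (y V).
Proof. by have [[[y_end _] _ _ _] _] := y_Lie; move=> CV; exact: (y_end V CV).1. Qed.

Let y_nat (V W : gmod g) (al : V -> W) : C V -> C W -> ghom al ->
  forall v, al (y V v) = y W (al v).
Proof. by have [[[_ y_nat] _ _ _] _] := y_Lie; exact: y_nat. Qed.

Lemma Lie_th_kernel (V : gmod g) (v : V) (z : int) phi :
  C V -> hV V v = z%:~R *: v -> du V phi -> phi v = 0 -> phi (y V v) = 0.
Proof.
move=> CV hv du_phi phi_v; have [[_ _ _ [delta delta_y]] y_van] := y_Lie.
rewrite -(delta_y V phi v (fun m => phi (m V v)) CV du_phi (fun m _ => erefl)).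
apply: y_van => //; split; first by exists V, phi, v.
move=> _ [s [s0 ->]] /=.
by rewrite ((th_spow s0 CV).2 z v hv) (linfunZ (du_linfun CV du_phi)) phi_v mulr0.
Qed.

Lemma Lie_th_eigen (V : gmod g) (v : V) (z : int) :
  C V -> v != 0 -> hV V v = z%:~R *: v -> exists la, y V v = la *: v.
Proof.
move=> CV v_neq0 hv; have [phi1 du_phi1 phi1_v] := du_separates CV v_neq0.
exists (phi1 (y V v) / phi1 v); apply/eqP; rewrite -subr_eq0; apply/eqP.
case: Hdu => _ _ du_sep _ _; apply: du_sep => // phi du_phi.
have phi_lin := du_linfun CV du_phi.
have := Lie_th_kernel (phi := fun x => - (phi v / phi1 v) * phi1 x + phi x) CV hv
  (du_comb _ CV du_phi1 du_phi).
rewrite mulNr divfK // addNr => /(_ erefl) /eqP; rewrite addrC mulNr subr_eq0 => /eqP yv.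
rewrite (linfunB phi_lin) (linfunZ phi_lin) yv; ring.
Qed.

Definition y_weight (z : int) (la : F) := exists (V : gmod g) (v : V),
  [/\ C V, v != 0, hV V v = z%:~R *: v & y V v = la *: v].

Lemma y_weight0 : y_weight 0 0.
Proof.
case: HC => _ _ _ _ [[V0 [CV0 V0_triv]] _]; have [[u0 [u0_neq0 _]] V0_act] := V0_triv.
have [[_ _ y_triv _] _] := y_Lie.
exists V0, u0; split=> //; first by rewrite V0_act scale0r.
by rewrite (y_triv V0 CV0 V0_triv) scale0r.
Qed.

Lemma y_weight_add z z' la la' :
  y_weight z la -> y_weight z' la' -> y_weight (z + z') (la + la').
Proof.
move=> [V [v [CV v_neq0 hv yv]]] [W [w [CW w_neq0 hw yw]]].
case: HC => _ _ _ tensor _; have [T [b [CT b_tensor]]] := tensor V W CV CW.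
have [[_ y_der _ _] _] := y_Lie; have [[[b_lin1 b_lin2] _] _] := b_tensor.
exists T, (b v w); split; [by [] | exact: tensor_neq0 | exact: tensor_eigen |].
by rewrite y_der // yv yw (linZ (b_lin1 _)) (linZ (b_lin2 _)) scalerDl.
Qed.

(* Put the two eigenvectors side by side in a direct sum: the sum is again an
   eigenvector of h, hence of y, and projecting back compares the two scalars. *)
Lemma y_weight_fun z la la' : y_weight z la -> y_weight z la' -> la = la'.
Proof.
move=> [V [v [CV v_neq0 hv yv]]] [W [w [CW w_neq0 hw yw]]].
case: HC => _ _ dsum _ _; have [D [i1 [i2 [p1 [p2 [CD D_dsum]]]]]] := dsum V W CV CW.
have [[i1_lin i2_lin p1_lin p2_lin [p1i1 p2i2 p1i2 p2i1 _]] i1_hom i2_hom _ _] := D_dsum.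
have hd : hV D (i1 v + i2 w) = z%:~R *: (i1 v + i2 w).
  by rewrite (linD (gm_act_lin h)) -i1_hom.2 -i2_hom.2 hv hw (linZ i1_lin) (linZ i2_lin) scalerDr.
have d_neq0 : i1 v + i2 w != 0.
  apply: contraNneq v_neq0 => /(congr1 p1).
  by rewrite (linD p1_lin) p1i1 p1i2 addr0 (lin0 p1_lin) => ->.
have [mu yd] := Lie_th_eigen CD d_neq0 hd.
have yd' : y D (i1 v + i2 w) = i1 (la *: v) + i2 (la' *: w).
  by rewrite (linD (y_lin CD)) -(y_nat CV CD i1_hom) -(y_nat CW CD i2_hom) yv yw.
have proj1 : p1 (y D (i1 v + i2 w)) = la *: v by rewrite yd' (linD p1_lin) p1i1 p1i2 addr0.
have proj2 : p2 (y D (i1 v + i2 w)) = la' *: w by rewrite yd' (linD p2_lin) p2i1 p2i2 add0r.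
rewrite yd (linZ p1_lin) (linD p1_lin) p1i1 p1i2 addr0 in proj1.
rewrite yd (linZ p2_lin) (linD p2_lin) p2i1 p2i2 add0r in proj2.
by rewrite -(scale_vec_inj v_neq0 proj1) (scale_vec_inj w_neq0 proj2).
Qed.

Lemma Lie_th_scaled_h : exists c, natEq C y (fun V v => c *: hV V v).
Proof.
have [c y_c] := additive_rel_linear F0 y_weight0 y_weight_add y_weight_fun.
exists c => V CV v; have [l [Hl ->]] := h_diag CV v.
rewrite (lin_sum (y_lin CV)) (lin_sum (gm_act_lin h)) scaler_sumr !big_seq.
apply: eq_bigr => p pl; have [->|p_neq0] := eqVneq p.2 0.
  by rewrite (lin0 (y_lin CV)) (lin0 (gm_act_lin h)) scaler0.
have [la y_la] := Lie_th_eigen CV p_neq0 (Hl p pl).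
rewrite y_la (Hl p pl) scalerA -(y_c p.1 la) //.
by exists V, p.2; split=> //; exact: Hl.
Qed.
End LieTh.
End PowerMap.
End IntegrableH.

Theorem theorem2p37 (F : fieldType) (g : lieAlgebra F) (C : gmod g -> Prop)
  (du : forall V : gmod g, (V -> F) -> Prop) (h : g) :
  [pchar F] =i pred0 ->
  is_category C -> is_duals C du ->
  (forall V, C V -> intdiag (@gm_act _ _ V h)) ->
  (forall V, C V -> forall s : F, s != 0 ->
     exists f, is_spow (@gm_act _ _ V h) s f /\ EndDu du f) ->
  int_locfin C du h /\
  (* (a) *)
  (forall s : F, s != 0 -> exists m, inM C du m /\
     forall V, C V -> is_spow (@gm_act _ _ V h) s (m V)) /\
  (* (b), (c): for the map t_h : s |-> s^h *)
  (forall th : F -> natT g,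
     (forall s : F, s != 0 -> inM C du (th s) /\
        forall V, C V -> is_spow (@gm_act _ _ V h) s (th s V)) ->
     [/\ EV C h 0 /\ (forall z z', EV C h z -> EV C h z' -> EV C h (z + z')),
         natEq C (th 1) (fun V v => v) /\
         (forall s t : F, s != 0 -> t != 0 ->
            natEq C (th (s * t)) (fun V v => th s V (th t V v))),
         (forall f, coordM C du f -> laurent (fun s => f (th s))),
         (forall q : F -> F,
            (exists f, coordM C du f /\ forall s, s != 0 -> q s = f (th s)) <->
            (exists l : seq (F * int), (forall p, p \in l -> EV C h p.2) /\
               forall s, s != 0 -> q s = \sum_(p <- l) p.1 * s ^ p.2)) &
         (* (c) Lie(T_h) = F h, where T_h = image of t_h *)
         (forall y : natT g,
            inLie C du (fun m => exists s : F, s != 0 /\ m = th s) y <->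
            exists c : F, natEq C y (fun V v => c *: gm_act h v))]).
Proof.
move=> F0 HC Hdu h_diag h_spow.
split; first exact: h_int_locfin F0 h_diag h_spow.
split=> [s s0 | th th_hpow].
  exists (fun V => spow (gm_act h) s); split=> [|V CV].
    by apply: (hpow_inM h_diag h_spow s0).
  exact: (hpow_spec h_diag h_spow CV s0).1.
split.
- by split; [exact: EV0 | exact: EV_add HC Hdu].
- by split; [apply: (th1 h_diag th_hpow) | apply: (thM h_diag th_hpow)].
- by apply: (coordM_th_laurent Hdu h_diag th_hpow).
- by apply: (coordM_th_image HC Hdu h_diag th_hpow).
- move=> y; split; first by apply: (Lie_th_scaled_h F0 HC Hdu h_diag th_hpow).
  by case=> c; apply: (scaled_h_inLie F0 Hdu h_diag th_hpow).
Qed.
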